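(* Let $X$ be a shift space over a finite alphabet. If $X$ is balanced, then $X$ is boundedly supermultiplicative.
   Context: For a shift space $X\subseteq\mathcal{A}^{\mathbb{Z}}$ ($\mathcal{A}$ finite), $\mathcal{B}_n(X)$ denotes the set of words of length $n$ appearing in points of $X$, and $\mathcal{B}(X)=\bigcup_{n\ge1}\mathcal{B}_n(X)$. For $\omega\in\mathcal{B}(X)$ and $r\in\mathbb{N}$, $\mathcal{B}_{\omega,r}(X)$ is the set of words $u$ of length $r$ such that $\omega u\in\mathcal{B}(X)$. $X$ is boundedly supermultiplicative (BSM) if there is $K\ge1$ with $|\mathcal{B}_m(X)|\cdot|\mathcal{B}_n(X)|\le K|\mathcal{B}_{m+n}(X)|$ for all $m,n\ge1$. $X$ is balanced if there is $B>0$ such that $|\mathcal{B}_{\omega,r}(X)|/|\mathcal{B}_r(X)|\ge B$ for every $\omega\in\mathcal{B}(X)$ and every $r\in\mathbb{N}$. *)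

From HB Require Import structures.
From mathcomp Require Import all_boot all_order all_algebra.
From mathcomp Require Import boolp reals.
Set Implicit Arguments. Unset Strict Implicit. Unset Printing Implicit Defensive.
Import Order.TTheory GRing.Theory Num.Theory.

Definition shiftmap (A : Type) (x : int -> A) : int -> A := fun i => x (i + 1)%R.

Definition occurs (A : Type) (w : seq A) (x : int -> A) : Prop :=
  exists i : int, w = [seq x (i + (k%:Z))%R | k <- iota 0 (size w)].

(* X is a shift space: shift-invariant (sigma(X) = X) and closed in the
   product topology (A discrete): a point all of whose central windows occur in
   points of X belongs to X. *)
Definition is_shift_space (A : finType) (X : (int -> A) -> Prop) : Prop :=
  (forall x, X x -> X (shiftmap x)) /\
  (forall y, X y -> exists x, X x /\ shiftmap x = y) /\
  (forall x : int -> A,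
     (forall n : nat,
        exists y, X y /\ forall i : int, (- n%:Z <= i <= n%:Z)%R -> y i = x i) ->
     X x).

Definition inLang (A : Type) (X : (int -> A) -> Prop) (w : seq A) : Prop :=
  exists x, X x /\ occurs w x.

Definition Bn (A : finType) (X : (int -> A) -> Prop) (n : nat) : {set n.-tuple A} :=
  [set w : n.-tuple A | `[< inLang X (tval w) >]].

Definition Bfollow (A : finType) (X : (int -> A) -> Prop) (omega : seq A) (r : nat)
  : {set r.-tuple A} :=
  [set u : r.-tuple A | `[< inLang X (omega ++ tval u) >]].

Local Open Scope ring_scope.

Definition BSM (R : realType) (A : finType) (X : (int -> A) -> Prop) : Prop :=
  exists K : R, 1 <= K /\
    forall m n : nat, (0 < m)%N -> (0 < n)%N ->
      (#|Bn X m| * #|Bn X n|)%:R <= K * (#|Bn X (m + n)|)%:R.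

Definition balanced (R : realType) (A : finType) (X : (int -> A) -> Prop) : Prop :=
  exists B : R, 0 < B /\
    forall (omega : seq A) (r : nat), (0 < size omega)%N -> inLang X omega ->
      (0 < r)%N ->
      (#|Bfollow X omega r|)%:R / (#|Bn X r|)%:R >= B.

From mathcomp Require Import all_boot all_order all_algebra.
From mathcomp Require Import boolp reals.
Import Order.TTheory GRing.Theory Num.Theory.

(* Gluing a word [w] of [B_m] to each of its followers of length [n] injects
   the pairs [(w, u)] into [B_(m+n)], so [sum_w |B_(w,n)| <= |B_(m+n)|].  By
   balancedness every summand is at least [B |B_n|], whence
   [|B_m| |B_n| <= B^-1 |B_(m+n)|].  Neither step uses that [X] is a shift
   space: the counting works for any set of points. *)

Lemma cat_tuple_pair_inj (T : Type) (m n : nat) :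
  injective (fun p : m.-tuple T * n.-tuple T => cat_tuple p.1 p.2).
Proof.
move=> [a b] [c d] /(congr1 val) /= eq_cat.
have ac : tval a = c.
  by rewrite -(take_size_cat b (size_tuple a)) eq_cat take_size_cat ?size_tuple.
have bd : tval b = d.
  by rewrite -(drop_size_cat b (size_tuple a)) eq_cat drop_size_cat ?size_tuple.
by congr pair; apply: val_inj.
Qed.

Lemma sum_card_Bfollow_le (A : finType) (X : (int -> A) -> Prop) (m n : nat) :
  (\sum_(w in Bn X m) #|Bfollow X (tval w) n| <= #|Bn X (m + n)|)%N.
Proof.
pose pairs := [set p : m.-tuple A * n.-tuple A |
                (p.1 \in Bn X m) && (p.2 \in Bfollow X (tval p.1) n)].
have -> : (\sum_(w in Bn X m) #|Bfollow X (tval w) n| = #|pairs|)%N.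
  rewrite -sum1_card (eq_bigr (fun w => \sum_(u in Bfollow X (tval w) n) 1)%N);
    last by move=> w _; rewrite sum1_card.
  rewrite (pair_big_dep (fun w => w \in Bn X m) (fun w u => u \in Bfollow X (tval w) n)).
  by apply: eq_bigl => p; rewrite /pairs inE.
rewrite -(card_imset _ (@cat_tuple_pair_inj A m n)).
apply/subset_leq_card/subsetP => _ /imsetP[[w u] + ->].
by rewrite !inE /= => /andP[_].
Qed.

Local Open Scope ring_scope.

Lemma balanced_card_mul_le {R : realType} {A : finType}
    {X : (int -> A) -> Prop} {B : R} {m n : nat} :
  (forall w : m.-tuple A, w \in Bn X m ->
     B * #|Bn X n|%:R <= #|Bfollow X (tval w) n|%:R) ->
  B * (#|Bn X m| * #|Bn X n|)%:R <= #|Bn X (m + n)|%:R.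
Proof.
move=> follow_ge.
apply: (@le_trans _ _ (\sum_(w in Bn X m) #|Bfollow X (tval w) n|)%N%:R);
  last by rewrite ler_nat sum_card_Bfollow_le.
rewrite natrM mulrCA -sum1_card natr_sum mulr_suml natr_sum.
by apply: ler_sum => w Bw; rewrite mul1r follow_ge.
Qed.

Theorem proposition3p6 (R : realType) (A : finType) (X : (int -> A) -> Prop) :
  is_shift_space X -> balanced R X -> BSM R X.
Proof.
move=> _ [B [B_gt0 balB]].
exists (Num.max 1 B^-1); split=> [|m n m_gt0 n_gt0]; first by rewrite le_max lexx.
have follow_ge (w : m.-tuple A) : w \in Bn X m ->
    B * #|Bn X n|%:R <= #|Bfollow X (tval w) n|%:R.
  rewrite inE => /asboolP Lw.
  (* when [B_n] is empty the ratio in [balanced] is the junk value [x / 0 = 0] *)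
  have [->|Bn_neq0] := eqVneq #|Bn X n| 0%N; first by rewrite mulr0.
  have := balB (tval w) n; rewrite size_tuple => /(_ m_gt0 Lw n_gt0).
  by rewrite ler_pdivlMr // ltr0n lt0n.
have K_ge : 1 <= B * Num.max 1 B^-1.
  by rewrite -(mulfV (lt0r_neq0 B_gt0)) ler_pM2l // le_max lexx orbT.
apply: (le_trans (ler_peMl (ler0n _ _) K_ge)).
by rewrite [B * _]mulrC -mulrA ler_wpM2l ?balanced_card_mul_le // le_max ler01.
Qed.
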